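(* Let $G$ be a tree on vertex set $[n]$ and let $p$ be the maximum length (number of edges) of a path in $G$. Let $\mathrm{CIM}_G=\operatorname{conv}\left(c_\mathcal{G}\colon \mathcal{G}\text{ a DAG on }[n]\text{ with skeleton } G\right)$. Then $\operatorname{diam}(\mathrm{CIM}_G)\geq \left\lfloor \frac{p}{2}\right\rfloor$.
   Context: For a directed acyclic graph (DAG) $\mathcal{G}$ on vertex set $[n]=\{1,\dots,n\}$, the characteristic imset $c_\mathcal{G}$ is the 0/1-vector indexed by the subsets $S\subseteq[n]$ with $|S|\geq 2$, with $c_\mathcal{G}(S)=1$ if there exists $i\in S$ such that $S\subseteq \mathrm{pa}_\mathcal{G}(i)\cup\{i\}$ (where $\mathrm{pa}_\mathcal{G}(i)$ is the set of parents of $i$), and $c_\mathcal{G}(S)=0$ otherwise. The skeleton of a DAG is the undirected graph with the same vertices and adjacencies. For a polytope $P$, the vertex-edge graph $G(P)$ has the vertices of $P$ as nodes, with two vertices adjacent iff their convex hull is an edge of $P$; $\operatorname{diam}(P)$ is the maximum over pairs of vertices of the length of a shortest path between them in $G(P)$. *)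

From mathcomp Require Import all_boot all_order all_algebra.
From mathcomp Require Import reals.
Set Implicit Arguments. Unset Strict Implicit. Unset Printing Implicit Defensive.
Import Order.TTheory GRing.Theory Num.Theory.
Local Open Scope ring_scope.

Definition is_tree (n : nat) (G : rel 'I_n) : Prop :=
  [/\ symmetric G, irreflexive G,
      (forall i j, connect G i j) &
      ~ (exists s : seq 'I_n, [/\ uniq s, (2 < size s)%N & cycle G s])].

(* p is the maximum length (number of edges) of a path in G. A path with k
   edges is given by a start vertex x and k further vertices s, all distinct. *)
Definition is_path (n : nat) (G : rel 'I_n) (x : 'I_n) (s : seq 'I_n) : bool :=
  path G x s && uniq (x :: s).

Definition max_path_length (n : nat) (G : rel 'I_n) (p : nat) : Prop :=
  (exists x s, is_path G x s /\ size s = p) /\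
  (forall x s, is_path G x s -> size s <= p)%N.

(* A directed graph on [n] is given by its parent sets: j -> i iff j \in pa i. *)
Definition digraph (n : nat) := {ffun 'I_n -> {set 'I_n}}.

Definition darc (n : nat) (D : digraph n) : rel 'I_n := fun j i => j \in D i.

Definition is_dag (n : nat) (D : digraph n) : bool :=
  [forall i, forall j, darc D j i ==> ~~ connect (darc D) i j].

Definition has_skeleton (n : nat) (D : digraph n) (G : rel 'I_n) : bool :=
  [forall i, forall j, G i j == (darc D i j || darc D j i)].

Definition cidx (n : nat) := {S : {set 'I_n} | (1 < #|S|)%N}.

Definition point (R : realType) (n : nat) := {ffun cidx n -> R}.

Definition cim (R : realType) (n : nat) (D : digraph n) : point R n :=
  [ffun S : cidx n => (if [exists i in val S, val S \subset i |: D i] then 1 else 0) : R].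

Definition CIM_points (R : realType) (n : nat) (G : rel 'I_n) : seq (point R n) :=
  [seq cim R D | D <- enum (fun D : digraph n => is_dag D && has_skeleton D G)].

Section Polytope.
Variables (R : realType) (I : finType).
Local Notation pt := {ffun I -> R}.

Definition conv (V : seq pt) (x : pt) : Prop :=
  exists lam : 'I_(size V) -> R,
    [/\ forall i, 0 <= lam i, \sum_i lam i = 1 &
        forall k, x k = \sum_i lam i * (nth [ffun=> 0] V i) k].

Definition dotp (c x : pt) : R := \sum_k c k * x k.

Definition face_of (V : seq pt) (F : pt -> Prop) : Prop :=
  exists (c : pt) (b : R),
    (forall x, conv V x -> dotp c x <= b) /\
    (forall x, F x <-> (conv V x /\ dotp c x = b)).

Definition is_vertex (V : seq pt) (v : pt) : Prop := face_of V (fun x => x = v).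

Definition ve_adj (V : seq pt) (u v : pt) : Prop :=
  [/\ is_vertex V u, is_vertex V v, u <> v & face_of V (conv [:: u; v])].

Fixpoint walk (V : seq pt) (x : pt) (s : seq pt) : Prop :=
  match s with
  | [::] => True
  | y :: s' => ve_adj V x y /\ walk V y s'
  end.

Definition dist_ge (V : seq pt) (u v : pt) (k : nat) : Prop :=
  forall s, walk V u s -> last u s = v -> (k <= size s)%N.

Definition diam_ge (V : seq pt) (k : nat) : Prop :=
  exists u v, [/\ is_vertex V u, is_vertex V v & dist_ge V u v k].

End Polytope.

From mathcomp Require Import all_boot all_order all_algebra.
From mathcomp Require Import reals zify lra.
Set Implicit Arguments. Unset Strict Implicit. Unset Printing Implicit Defensive.
Import Order.TTheory GRing.Theory Num.Theory.

(* Fix a longest path v_0, ..., v_p of the tree.  For a 0/1 point x, count the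
   inner indices j whose triple {v_(j-1), v_j, v_(j+1)} has coordinate 1; at the
   imset of a DAG D this is the number of colliders v_(j-1) -> v_j <- v_(j+1)
   of D on the path.  Across an edge [c_D, c_D'] of the polytope the count drops
   by at most one: otherwise, reading the orientations of the path edges as bit
   sequences, a discrete intermediate value argument finds a path edge oriented
   alike in D and D' such that exchanging D and D' on one side of it gives two
   DAGs whose imsets sum to c_D + c_D' and whose counts differ from both, which
   is impossible on an edge between 0/1 vertices.  Orienting the path
   alternately gives floor(p/2) colliders and orienting it monotonically gives
   none, so these two vertices are at distance at least floor(p/2). *)

Section Polytope.
Variables (R : realType) (I : finType).
Local Notation pt := {ffun I -> R}.
Local Open Scope ring_scope.
Implicit Types (V : seq pt) (c u v w x y z : pt).

Lemma dotp_conv V c x (lam : 'I_(size V) -> R) :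
  (forall k, x k = \sum_i lam i * (nth [ffun=> 0] V i) k) ->
  dotp c x = \sum_i lam i * dotp c (nth [ffun=> 0] V i).
Proof.
move=> hx; rewrite /dotp.
under eq_bigr do rewrite hx mulr_sumr.
rewrite exchange_big /=; apply: eq_bigr => i _; rewrite mulr_sumr.
by apply: eq_bigr => k _; rewrite mulrCA.
Qed.

Lemma conv_mem V v : v \in V -> conv V v.
Proof.
move=> vV; pose i0 := Ordinal (etrans (index_mem v V) vV).
exists (fun i => if i == i0 then 1 else 0); split.
- by move=> i; case: ifP.
- by rewrite (bigD1 i0) //= eqxx big1 ?addr0 // => i /negbTE ->.
- move=> k; rewrite (bigD1 i0) //= eqxx mul1r big1 ?addr0 ?nth_index //.
  by move=> i /negbTE ->; rewrite mul0r.
Qed.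

Lemma conv_argmax_support V c b x (lam : 'I_(size V) -> R) :
  (forall i, 0 <= lam i) -> \sum_i lam i = 1 ->
  (forall k, x k = \sum_i lam i * (nth [ffun=> 0] V i) k) ->
  (forall i : 'I_(size V), dotp c (nth [ffun=> 0] V i) <= b) -> dotp c x = b ->
  forall i, lam i != 0 -> dotp c (nth [ffun=> 0] V i) = b.
Proof.
move=> lam_ge0 lam_sum1 xE le_b cx_b.
have gap_ge0 i : true -> 0 <= lam i * (b - dotp c (nth [ffun=> 0] V i)).
  by move=> _; rewrite mulr_ge0 ?subr_ge0.
have gap0 : \sum_i lam i * (b - dotp c (nth [ffun=> 0] V i)) = 0.
  under eq_bigr do rewrite mulrBr.
  by rewrite sumrB -mulr_suml lam_sum1 mul1r -(dotp_conv c xE) cx_b subrr.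
move=> i lam_i; move/eqP: (psumr_eq0P gap_ge0 gap0 (i := i) isT).
by rewrite mulf_eq0 (negbTE lam_i) subr_eq0 => /eqP <-.
Qed.

Lemma vertex_mem V u : is_vertex V u -> u \in V.
Proof.
case=> c [b [le_b faceE]].
have [[lam [lam_ge0 lam_sum1 uE]] cu_b] := (faceE u).1 erefl.
have [i lam_i|lam0] := pickP (fun i => lam i != 0); last first.
  move: lam_sum1; rewrite big1 => [/eqP|i _]; first by rewrite eq_sym oner_eq0.
  by apply/eqP; rewrite -[_ == _]negbK lam0.
have le_b' (j : 'I_(size V)) : dotp c (nth [ffun=> 0] V j) <= b.
  exact/le_b/conv_mem/mem_nth.
have ci_b := conv_argmax_support lam_ge0 lam_sum1 uE le_b' cu_b lam_i.
have <- : nth [ffun=> 0] V i = u by apply/faceE; split=> //; exact/conv_mem/mem_nth.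
exact: mem_nth.
Qed.

Definition is01 x := forall k, x k = 0 \/ x k = 1.

Lemma is01_dotp_max u w : is01 u -> is01 w ->
  dotp [ffun k => 2 * u k - 1] w <= \sum_k u k /\
  (dotp [ffun k => 2 * u k - 1] w = \sum_k u k -> w = u).
Proof.
move=> u01 w01.
have gapE : \sum_k u k - dotp [ffun k => 2 * u k - 1] w =
            \sum_k (u k - (2 * u k - 1) * w k).
  by rewrite /dotp sumrB; congr (_ - _); apply: eq_bigr => k _; rewrite ffunE.
have gap_ge0 k : true -> 0 <= u k - (2 * u k - 1) * w k.
  by move=> _; case: (u01 k) => ->; case: (w01 k) => ->; lra.
split; first by rewrite -subr_ge0 gapE sumr_ge0.
move=> eq_max; move: gapE; rewrite eq_max subrr => /esym/(psumr_eq0P gap_ge0) gap0.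
apply/ffunP => k; have := gap0 k isT.
by case: (u01 k) => ->; case: (w01 k) => ->; lra.
Qed.

Lemma is01_vertex V u : (forall v, v \in V -> is01 v) -> u \in V -> is_vertex V u.
Proof.
move=> V01 uV; have u01 := V01 u uV.
pose c := [ffun k => 2 * u k - 1].
have le_max (j : 'I_(size V)) : dotp c (nth [ffun=> 0] V j) <= \sum_k u k.
  exact: (is01_dotp_max u01 (V01 _ (mem_nth _ (ltn_ord j)))).1.
exists c, (\sum_k u k); split=> [x [lam [lam_ge0 lam_sum1 xE]]|x].
  rewrite (dotp_conv _ xE) -[leRHS]mul1r -lam_sum1 mulr_suml.
  by apply: ler_sum => i _; apply: ler_wpM2l.
split=> [->|[[lam [lam_ge0 lam_sum1 xE]] cx_max]].
  split; first exact: conv_mem.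
  by apply: eq_bigr => k _; rewrite ffunE; case: (u01 k) => ->; lra.
have supp := conv_argmax_support lam_ge0 lam_sum1 xE le_max cx_max.
apply/ffunP => k; rewrite xE -[RHS]mul1r -lam_sum1 mulr_suml.
apply: eq_bigr => i _; have [->|lam_i] := eqVneq (lam i) 0; first by rewrite !mul0r.
have Vi01 : is01 (nth [ffun=> 0] V i) by apply/V01/mem_nth.
by rewrite ((is01_dotp_max u01 Vi01).2 (supp i lam_i)).
Qed.

Lemma conv2P x y z :
  conv [:: x; y] z <-> exists2 l, 0 <= l <= 1 & forall k, z k = l * x k + (1 - l) * y k.
Proof.
split=> [[lam [lam_ge0 lam_sum1 zE]]|[l /andP[l_ge0 l_le1] zE]].
  move: lam_sum1; rewrite !big_ord_recl big_ord0 addr0 => lam_sum1.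
  exists (lam ord0); first by have := lam_ge0 ord0; have := lam_ge0 (lift ord0 ord0); lra.
  move=> k; rewrite zE !big_ord_recl big_ord0 addr0 /=.
  by congr (_ + _); congr (_ * _); lra.
exists (fun i : 'I_2 => if val i == 0%N then l else 1 - l); split.
- by move=> i; case: ifP => _; lra.
- by rewrite !big_ord_recl big_ord0 /=; lra.
- by move=> k; rewrite zE !big_ord_recl big_ord0 /= addr0.
Qed.

(* A 0/1 point strictly between two 0/1 points would have a coordinate in ]0, 1[. *)
Lemma is01_segment x y z l : is01 x -> is01 y -> is01 z -> 0 <= l <= 1 ->
  (forall k, z k = l * x k + (1 - l) * y k) -> z = x \/ z = y.
Proof.
move=> x01 y01 z01 /andP[l_ge0 l_le1] zE.
have [l1|l_neq1] := eqVneq l 1.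
  by left; apply/ffunP => k; rewrite zE l1; lra.
have [l0|l_neq0] := eqVneq l 0.
  by right; apply/ffunP => k; rewrite zE l0; lra.
have l_gt0 : 0 < l by rewrite lt_def l_neq0.
have l_lt1 : l < 1 by rewrite lt_def eq_sym l_neq1.
left; apply/ffunP => k; move: (zE k).
by case: (x01 k) => ->; case: (y01 k) => ->; case: (z01 k) => ->; lra.
Qed.

Lemma face_pair_sum V x y w1 w2 : face_of V (conv [:: x; y]) ->
  conv V w1 -> conv V w2 -> (forall k, w1 k + w2 k = x k + y k) ->
  is01 x -> is01 y -> is01 w1 -> w1 = x \/ w1 = y.
Proof.
move=> [c [b [le_b faceE]]] w1V w2V sumE x01 y01 w101.
have x_seg : conv [:: x; y] x.
  by apply/conv2P; exists 1; [rewrite ler01 lexx | move=> k; lra].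
have y_seg : conv [:: x; y] y.
  by apply/conv2P; exists 0; [rewrite ler01 lexx | move=> k; lra].
have [_ cx_b] := (faceE x).1 x_seg; have [_ cy_b] := (faceE y).1 y_seg.
have cw1_le := le_b _ w1V; have cw2_le := le_b _ w2V.
have dotp_sum : dotp c w1 + dotp c w2 = dotp c x + dotp c y.
  by rewrite /dotp -!big_split; apply: eq_bigr => k _ /=; rewrite -!mulrDr sumE.
have cw1_b : dotp c w1 = b by lra.
have [l l01 w1E] := (conv2P x y w1).1 ((faceE w1).2 (conj w1V cw1_b)).
exact: is01_segment x01 y01 w101 l01 w1E.
Qed.

End Polytope.

Section Descents.
Implicit Types (A B : nat -> bool) (k m N : nat).

Definition ndesc A lo hi := \sum_(lo <= j < hi) (A j && ~~ A j.+1).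
Definition nflips A lo hi := \sum_(lo <= j < hi) (A j != A j.+1).

Lemma ndesc_cat A a b c : a <= b -> b <= c -> ndesc A a c = ndesc A a b + ndesc A b c.
Proof. exact: big_cat_nat. Qed.

Lemma ndesc_nflips A k m : k <= m -> 2 * ndesc A k m + A m = A k + nflips A k m.
Proof.
move/subnKC=> <-; elim: (m - k) => [|d IH].
  by rewrite addn0 /ndesc /nflips !big_geq // addn0.
rewrite addnS /ndesc /nflips !big_nat_recr ?leq_addr //=.
move: IH; rewrite /ndesc /nflips.
by case: (A (k + d)); case: (A (k + d).+1) => /=; lia.
Qed.

Lemma nflips_compl A B k k' : k < k' -> (forall j, k < j < k' -> B j = ~~ A j) ->
  nflips A k k' <= nflips B k k' + 2.
Proof.
move=> lt_kk' BE.
have sum_eq1 c : \sum_(k <= j < k') (j == c) <= 1.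
  rewrite (eq_bigr (fun j => if j == c then 1 else 0)) => [|j _]; last by case: eqP.
  by rewrite -big_mkcond big_nat1_eq; case: ifP.
apply: (@leq_trans (\sum_(k <= j < k') ((B j != B j.+1) + ((j == k) + (j == k'.-1))))).
  rewrite /nflips !big_nat; apply: leq_sum => j /andP[le_kj lt_jk'].
  have [|ne_jk] := eqVneq j k; first by case: (A j != A j.+1); lia.
  have [|ne_jk'] := eqVneq j k'.-1; first by case: (A j != A j.+1); lia.
  by rewrite !BE ?(negb_eqb, addn0); [case: (A j); case: (A j.+1) | lia | lia].
rewrite !big_split /= leq_add2l.
by have := sum_eq1 k; have := sum_eq1 k'.-1; lia.
Qed.

Lemma ndesc_compl A B k k' : k < k' -> A k = B k -> A k' = B k' ->
  (forall j, k < j < k' -> B j = ~~ A j) -> ndesc A k k' <= (ndesc B k k').+1.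
Proof.
move=> lt_kk' eq_k eq_k' BE; have := nflips_compl lt_kk' BE.
have := ndesc_nflips A (ltnW lt_kk'); have := ndesc_nflips B (ltnW lt_kk').
by rewrite -eq_k -eq_k'; case: (A k); case: (A k'); lia.
Qed.

Definition splice A B k j := if j < k then B j else A j.

Lemma ndesc_splice A B k N : A k = B k -> k <= N ->
  ndesc (splice A B k) 0 N = ndesc B 0 k + ndesc A k N.
Proof.
move=> eq_k le_kN; rewrite (ndesc_cat _ (leq0n k) le_kN).
congr (_ + _); apply: eq_big_nat => j /andP[le_j lt_j]; rewrite /splice.
  by rewrite lt_j; case: ltnP => // le_kj; rewrite (_ : j.+1 = k) ?eq_k //; lia.
by rewrite !ltnNge le_j (leq_trans le_j).
Qed.

Lemma discrete_ivt (P : pred nat) (f : nat -> nat) N t :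
  (forall k, k < N -> P k -> exists2 k', k < k' <= N & P k' /\ f k <= (f k').+1) ->
  f N < t -> forall k, k <= N -> P k -> t <= f k -> exists2 k', k <= k' < N & P k' /\ f k' = t.
Proof.
move=> step lt_fN_t k; have [d] := ubnP (N - k).
elim: d k => [|d IH] k // dist_k le_kN Pk le_t_fk.
have lt_kN : k < N.
  by rewrite ltn_neqAle le_kN andbT; apply: contraTneq le_t_fk => ->; rewrite -ltnNge.
have [eq_t|lt_t] := eqVneq (f k) t; first by exists k; rewrite ?leqnn.
have [k' /andP[lt_kk' le_k'N] [Pk' le_fk]] := step k lt_kN Pk.
have [k'' /andP[le_k'k'' lt_k''N] P_k''] := IH k' ltac:(lia) le_k'N Pk' ltac:(lia).
by exists k''; rewrite ?lt_k''N ?(ltnW (leq_trans lt_kk' le_k'k'')).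
Qed.

Lemma splice_lose_one_descent A B N : A 0 = B 0 -> A N = B N ->
  ndesc B 0 N + 2 <= ndesc A 0 N ->
  exists k, [/\ 0 < k < N, A k = B k & (ndesc (splice A B k) 0 N).+1 = ndesc A 0 N].
Proof.
(* at an agreement point [k], [f k] counts the descents of [splice A B k] *)
move=> eq0 eqN lt_BA; pose f k := ndesc B 0 k + ndesc A k N.
have f0 : f 0 = ndesc A 0 N by rewrite /f /ndesc big_geq.
have fN : f N = ndesc B 0 N by rewrite /f /ndesc [X in _ + X]big_geq ?addn0.
have step k : k < N -> A k == B k ->
    exists2 k', k < k' <= N & (A k' == B k') /\ f k <= (f k').+1.
  move=> lt_kN /eqP eq_k; have ex_k' : exists k', (k < k') && (A k' == B k').
    by exists N; rewrite lt_kN eqN eqxx.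
  case: (ex_minnP ex_k') => k' /andP[lt_kk' /eqP eq_k'] min_k'.
  have le_k'N : k' <= N by apply: min_k'; rewrite lt_kN eqN eqxx.
  exists k'; first by rewrite lt_kk'.
  split; first by rewrite eq_k'.
  have BE j : k < j < k' -> B j = ~~ A j.
    move=> /andP[lt_kj lt_jk']; have [eq_j|] := eqVneq (A j) (B j).
      by have := min_k' j; rewrite lt_kj eq_j eqxx leqNgt lt_jk' => /(_ isT).
    by case: (A j); case: (B j).
  have := ndesc_compl lt_kk' eq_k eq_k' BE.
  rewrite /f (ndesc_cat B (leq0n k) (ltnW lt_kk')) (ndesc_cat A (ltnW lt_kk') le_k'N).
  lia.
have fN_lt : f N < (ndesc A 0 N).-1 by lia.
have le_f0 : (ndesc A 0 N).-1 <= f 0 by rewrite f0 leq_pred.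
have [k /andP[_ lt_kN] [/eqP eq_k fk]] :=
  discrete_ivt step fN_lt (leq0n N) (introT eqP eq0) le_f0.
exists k; split=> //.
  by rewrite lt_kN andbT lt0n; apply/eqP => k0; move: fk; rewrite k0 f0; lia.
by rewrite ndesc_splice ?(ltnW lt_kN) // -/(f k) fk; lia.
Qed.

End Descents.

Section TreeOrientations.
Variables (n : nat) (G : rel 'I_n).
Implicit Types (D : digraph n) (L : {set 'I_n}).

Definition asym D := forall i j, darc D i j -> darc D j i -> False.

Lemma dag_asym D : is_dag D -> asym D.
Proof.
move=> /forallP dagD i j Dij Dji.
by move: (dagD j) => /forallP /(_ i) /implyP /(_ Dij); rewrite connect1.
Qed.

Lemma skeletonE D : has_skeleton D G -> forall i j, G i j = darc D i j || darc D j i.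
Proof. by move=> /forallP skD i j; apply/eqP; move/forallP: (skD i). Qed.

Lemma skeleton_darc D i j : has_skeleton D G -> darc D i j -> G i j.
Proof. by move=> /skeletonE -> ->. Qed.

Lemma darc_flip D i j : is_dag D -> has_skeleton D G -> G i j -> darc D j i = ~~ darc D i j.
Proof.
move=> dagD skD; rewrite (skeletonE skD); have [Dij _|_ /= -> //] := boolP (darc D i j).
by apply/negbTE/negP; apply: dag_asym Dij.
Qed.

Definition agree_across L Dx Dy :=
  forall a b, a \in L -> b \notin L -> darc Dx a b = darc Dy a b /\ darc Dx b a = darc Dy b a.

Definition mix L D1 D2 : digraph n := [ffun i => if i \in L then D1 i else D2 i].

Definition orient (r : 'I_n -> nat) : digraph n := [ffun j => [set i | G i j && (r i < r j)]].

Hypothesis treeG : is_tree G.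

Lemma tree_path_cycle a q : path G a q -> uniq (a :: q) -> G (last a q) a -> size q <= 1.
Proof.
case: treeG => _ _ _ no_cycle pq uq Ga; rewrite leqNgt; apply/negP => q_gt1.
by apply: no_cycle; exists (a :: q); rewrite /= rcons_path pq Ga.
Qed.

Lemma tree_asym_dag D : has_skeleton D G -> asym D -> is_dag D.
Proof.
case: treeG => _ irrG _ _ skD asymD.
apply/forallP => i; apply/forallP => j; apply/implyP => Dji; apply/negP.
case/connectP => q pq ej; subst j; case/shortenP: pq Dji => q' pq' uq' _ Dji.
have pG : path G i q' by apply: sub_path pq' => a b; apply: skeleton_darc.
move: (tree_path_cycle pG uq' (skeleton_darc skD Dji)).
case: q' pq' {uq' pG} Dji => [|c [|d q']] //= pq' Dji _.
  by move: (skeleton_darc skD Dji); rewrite irrG.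
by case/andP: pq' => Dic _; apply: (asymD i c).
Qed.

Lemma orient_dag r : injective r -> is_dag (orient r) && has_skeleton (orient r) G.
Proof.
case: treeG => symG irrG _ _ inj_r.
have skD : has_skeleton (orient r) G.
  apply/forallP => a; apply/forallP => b; rewrite /darc !ffunE !inE (symG b a).
  have [Gab|] := boolP (G a b) => //=.
  have neq_ab : a != b by apply: contraTneq Gab => ->; rewrite irrG.
  by rewrite -neq_ltn (inj_eq inj_r).
rewrite skD andbT; apply: tree_asym_dag skD _ => i j.
by rewrite /darc !ffunE !inE => /andP[_ lt_ij] /andP[_]; rewrite ltnNge ltnW.
Qed.

Lemma mix_dag L Dx Dy : is_dag Dx -> has_skeleton Dx G -> is_dag Dy -> has_skeleton Dy G ->
  agree_across L Dx Dy -> is_dag (mix L Dy Dx) && has_skeleton (mix L Dy Dx) G.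
Proof.
move=> dagx skx dagy sky agree.
have local a b : (darc (mix L Dy Dx) a b = darc Dx a b /\ darc (mix L Dy Dx) b a = darc Dx b a) \/
                 (darc (mix L Dy Dx) a b = darc Dy a b /\ darc (mix L Dy Dx) b a = darc Dy b a).
  rewrite /darc !ffunE; case: (boolP (a \in L)) => aL; case: (boolP (b \in L)) => bL.
  - by right.
  - by left; have [] := agree a b aL bL; rewrite /darc => ->.
  - by right; have [] := agree b a bL aL; rewrite /darc => ->.
  - by left.
have skD : has_skeleton (mix L Dy Dx) G.
  apply/forallP => a; apply/forallP => b.
  by case: (local a b) => -[-> ->]; rewrite -?(skeletonE skx) -?(skeletonE sky).
rewrite skD andbT; apply: tree_asym_dag skD _ => a b.
by case: (local a b) => -[-> ->]; apply: dag_asym.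
Qed.

Definition cut_edge a b : rel 'I_n :=
  fun x y => G x y && ~~ ((x == a) && (y == b) || (x == b) && (y == a)).

Definition side a b : {set 'I_n} := [set i | connect (cut_edge a b) a i].

Lemma side_notin a b : G a b -> b \notin side a b.
Proof.
case: treeG => symG irrG _ _ Gab; rewrite inE; apply/negP.
case/connectP => q pq eb; case/shortenP: pq eb => q' pq' uq' _ eb.
have pG : path G a q' by apply: sub_path pq' => x y /andP[].
move: (tree_path_cycle pG uq'); rewrite -eb symG => /(_ Gab).
case: q' pq' {uq' pG} eb => [|c [|d q']] //= pq' eb _.
  by move: Gab; rewrite eb irrG.
by move: pq'; rewrite -eb /cut_edge !eqxx andbF.
Qed.

Lemma side_cross a b x y : G a b -> x \in side a b -> y \notin side a b -> G x y ->
  x = a /\ y = b.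
Proof.
move=> Gab xL yL Gxy; have [cut_xy|] := boolP (cut_edge a b x y).
  by move: yL; rewrite !inE in xL *; rewrite (connect_trans xL (connect1 cut_xy)).
rewrite /cut_edge Gxy negbK => /orP[] /andP[/eqP ex /eqP ey]; first by [].
by move: xL; rewrite ex (negbTE (side_notin Gab)).
Qed.

Lemma side_agree a b Dx Dy : G a b ->
  is_dag Dx -> has_skeleton Dx G -> is_dag Dy -> has_skeleton Dy G ->
  darc Dx a b = darc Dy a b -> agree_across (side a b) Dx Dy.
Proof.
move=> Gab dagx skx dagy sky eq_ab x y xL yL.
have [Gxy|nGxy] := boolP (G x y).
  have [-> ->] := side_cross Gab xL yL Gxy.
  by rewrite !(darc_flip _ _ Gab) ?eq_ab.
have no_arc D : has_skeleton D G -> darc D x y = false /\ darc D y x = false.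
  move=> skD; rewrite (skeletonE skD) negb_or in nGxy.
  by case/andP: nGxy => /negbTE -> /negbTE ->.
by have [-> ->] := no_arc _ skx; have [-> ->] := no_arc _ sky.
Qed.

End TreeOrientations.

Section Imsets.
Variables (R : realType) (n : nat).
Implicit Types (D : digraph n) (G : rel 'I_n).

(* Asymmetry makes the vertex [i] with [S \subset i |: D i] unique. *)
Lemma cim_centers D (S : cidx n) : asym D ->
  cim R D S = (\sum_(i in val S) (val S \subset i |: D i))%:R%R.
Proof.
move=> asymD; rewrite ffunE; case: existsP => [[i /andP[iS Si]]|none]; last first.
  rewrite big1 // => i iS; apply/eqP; rewrite eqb0; apply/negP => Si.
  by apply: none; exists i; rewrite iS.
rewrite (bigD1 i) //= Si big1 // => j /andP[jS ne_ji]; apply/eqP; rewrite eqb0; apply/negP => Sj.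
move: (subsetP Si j jS) (subsetP Sj i iS).
rewrite !in_setU1 (negbTE ne_ji) eq_sym (negbTE ne_ji) /=.
by move=> Dji Dij; apply: asymD Dij Dji.
Qed.

Lemma cim_mix L Dx Dy (S : cidx n) :
  asym Dx -> asym Dy -> asym (mix L Dy Dx) -> asym (mix L Dx Dy) ->
  (cim R (mix L Dy Dx) S + cim R (mix L Dx Dy) S = cim R Dx S + cim R Dy S)%R.
Proof.
move=> ax ay a1 a2; rewrite !cim_centers // -!natrD -!big_split /=.
by congr (_%:R)%R; apply: eq_bigr => i _; rewrite !ffunE; case: (i \in L) => //; rewrite addnC.
Qed.

Lemma cim_is01 D : is01 (cim R D).
Proof. by move=> S; rewrite ffunE; case: ifP; [right|left]. Qed.

Lemma CIM_pointsP G x :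
  reflect (exists D, [/\ is_dag D, has_skeleton D G & x = cim R D]) (x \in CIM_points R G).
Proof.
apply: (iffP mapP) => [[D]|[D [dagD skD ->]]].
  by rewrite mem_enum => /andP[dagD skD] ->; exists D.
by exists D; rewrite // mem_enum unfold_in /= dagD skD.
Qed.

Lemma cim_CIM_points G D : is_dag D -> has_skeleton D G -> cim R D \in CIM_points R G.
Proof. by move=> dagD skD; apply/CIM_pointsP; exists D. Qed.

Lemma CIM_points_is01 G x : x \in CIM_points R G -> is01 x.
Proof. by case/CIM_pointsP => D [_ _ ->]; apply: cim_is01. Qed.

End Imsets.

Lemma connect_nat_down (T : finType) (e : rel T) (f : nat -> T) a b : a <= b ->
  (forall i, a <= i < b -> e (f i.+1) (f i)) -> connect e (f b) (f a).
Proof.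
elim: b => [|b IH] le_ab ef; first by rewrite (_ : a = 0) //; lia.
have [->|ne_ab] := eqVneq a b.+1; first exact: connect0.
apply: connect_trans (connect1 (ef b _)) (IH _ _) => [||i /andP[le_ai lt_ib]]; try lia.
by apply: ef; lia.
Qed.

Lemma sum_odd m : \sum_(1 <= j < m) odd j = m./2.
Proof.
elim: m => [|m IH]; first by rewrite big_geq.
case: m IH => [|m] IH; first by rewrite big_geq.
rewrite big_nat_recr //= IH (_ : m.+1./2 = uphalf m) // uphalf_half.
by case: (odd m); lia.
Qed.

Definition rank_key n (h : 'I_n -> nat) (i : 'I_n) := h i * n + i.

Lemma rank_key_inj n (h : 'I_n -> nat) : injective (rank_key h).
Proof.
move=> a b /(congr1 (modn^~ n)); rewrite /rank_key !modnMDl !modn_small //.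
exact: val_inj.
Qed.

Lemma rank_key_ltE n (h : 'I_n -> nat) a b : h a != h b ->
  (rank_key h a < rank_key h b) = (h a < h b).
Proof.
have lt_key x y : h x < h y -> rank_key h x < rank_key h y.
  move=> lt_xy; apply: (@leq_trans ((h x).+1 * n)).
    by rewrite /rank_key mulSn addnC ltn_add2r ltn_ord.
  exact: leq_trans (leq_mul lt_xy (leqnn n)) (leq_addr _ _).
rewrite neq_ltn => /orP[] lt_ab; first by rewrite lt_ab lt_key.
by rewrite !ltnNge (ltnW lt_ab) (ltnW (lt_key _ _ lt_ab)).
Qed.

Section LongPath.
Variables (n : nat) (G : rel 'I_n) (x0 : 'I_n) (s : seq 'I_n).
Local Notation v j := (nth x0 (x0 :: s) j).
Implicit Types (D : digraph n).

(* [fwd D j] says that the [j]-th edge of the path is oriented forwards; the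
   padding [fwd D 0 = false], [fwd D (size s).+1 = true] creates no descent. *)
Definition fwd D j := (0 < j) && ((size s < j) || (v j.-1 \in D (v j))).

Definition collider D j := (v j.-1 \in D (v j)) && (v j.+1 \in D (v j)).

Definition triple j : {set 'I_n} := [set v j.-1; v j; v j.+1].

Definition collider_count (R : realType) (x : point R n) : nat :=
  \sum_(1 <= j < size s) (if insub (triple j) is Some T then x T == 1%R else false).

Hypotheses (treeG : is_tree G) (pathG : path G x0 s) (uniq_path : uniq (x0 :: s)).

Lemma v_edge j : j < size s -> G (v j) (v j.+1).
Proof. by move/pathP: pathG; apply. Qed.

Lemma v_edge_pred j : 0 < j <= size s -> G (v j.-1) (v j).
Proof. by case: j => // j /v_edge. Qed.

Lemma v_eq i j : i <= size s -> j <= size s -> (v i == v j) = (i == j).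
Proof. by move=> le_i le_j; rewrite nth_uniq. Qed.

Lemma collider_fwd D j : is_dag D -> has_skeleton D G -> 0 < j < size s ->
  collider D j = fwd D j && ~~ fwd D j.+1.
Proof.
move=> dagD skD /andP[j_gt0 lt_js].
rewrite /collider -[v j.+1 \in D (v j)]/(darc D (v j.+1) (v j)).
rewrite (darc_flip dagD skD (v_edge lt_js)) /fwd j_gt0 ltnNge (ltnW lt_js).
by rewrite (ltnS (size s)) (leqNgt (size s)) lt_js.
Qed.

Lemma ndesc_fwd D : is_dag D -> has_skeleton D G ->
  ndesc (fwd D) 0 (size s).+1 = \sum_(1 <= j < size s) collider D j.
Proof.
move=> dagD skD; rewrite /ndesc big_ltn // {1}/fwd /= add0n.
case: (posnP (size s)) => [->|s_gt0]; first by rewrite !big_geq.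
rewrite big_nat_recr //= [fwd D (size s).+1]/fwd ltnSn /= andbF addn0.
by apply: eq_big_nat => j hj; rewrite collider_fwd.
Qed.

Lemma triple_in_family D j : is_dag D -> has_skeleton D G -> 0 < j < size s ->
  [exists i in triple j, triple j \subset i |: D i] = collider D j.
Proof.
case: treeG => symG _ _ _ dagD skD /andP[j_gt0 lt_js].
set a := v j.-1; set b := v j; set c := v j.+1.
have ne_ab : a != b by rewrite v_eq; lia.
have ne_bc : b != c by rewrite v_eq; lia.
have ne_ac : a != c by rewrite v_eq; lia.
have Gab : G a b by apply: v_edge_pred; lia.
have Gbc : G b c by apply: v_edge.
have nGac : ~~ G a c.
  apply/negP => Gac; have pth : path G a [:: b; c] by rewrite /= Gab Gbc.
  have uniq_abc : uniq [:: a; b; c] by rewrite /= !inE negb_or ne_ab ne_ac ne_bc.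
  by have := tree_path_cycle treeG pth uniq_abc; rewrite /= symG Gac => /(_ isT).
apply/existsP/idP => [[i /andP[]]|]; last first.
  case/andP=> ab cb; exists b; rewrite !inE eqxx orbT /=.
  by apply/subsetP => z; rewrite !inE => /orP[/orP[]|] /eqP ->; rewrite ?eqxx ?ab ?cb ?orbT.
have Ta : a \in [set a; b; c] by rewrite !inE eqxx.
have Tc : c \in [set a; b; c] by rewrite !inE eqxx !orbT.
rewrite /triple -/a -/b -/c => abc_i /subsetP sub.
move: abc_i (sub a Ta) (sub c Tc); rewrite !inE => /orP[/orP[]|] /eqP -> /= ai ci.
- move: ci; rewrite eq_sym (negbTE ne_ac) /= => /(skeleton_darc skD).
  by rewrite symG (negbTE nGac).
- by move: ai ci; rewrite (negbTE ne_ab) eq_sym (negbTE ne_bc) /= => ab cb; rewrite /collider ab cb.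
- move: ai; rewrite (negbTE ne_ac) /= => /(skeleton_darc skD).
  by rewrite (negbTE nGac).
Qed.

Lemma triple_card j : 0 < j < size s -> 1 < #|triple j|.
Proof.
move=> /andP[j_gt0 lt_js]; apply: leq_trans (subset_leq_card (_ : [set v j; v j.+1] \subset _)).
  by rewrite cards2 v_eq //; lia.
by apply/subsetP => z; rewrite !inE => /orP[] ->; rewrite !orbT.
Qed.

Lemma collider_count_cim (R : realType) D : is_dag D -> has_skeleton D G ->
  collider_count (cim R D) = \sum_(1 <= j < size s) collider D j.
Proof.
move=> dagD skD; apply: eq_big_nat => j hj.
rewrite (insubT (fun S : {set 'I_n} => 1 < #|S|) (triple_card hj)) ffunE /= triple_in_family //.
by case: collider; rewrite ?eqxx // eq_sym oner_eq0.
Qed.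

Lemma side_path k j : 0 < k <= size s -> j <= size s ->
  (v j \in side G (v k.-1) (v k)) = (j < k).
Proof.
case: treeG => symG _ _ _ hk le_js; have /andP[k_gt0 le_ks] := hk.
have cut_step i : i < size s -> i.+1 != k -> cut_edge G (v k.-1) (v k) (v i.+1) (v i).
  by move=> lt_is ne_ik; rewrite /cut_edge symG v_edge // !v_eq; lia.
have [lt_jk|le_kj] := ltnP j k.
  rewrite inE; apply/idP.
  apply: (@connect_nat_down _ _ (fun i => v i)) => [|i /andP[_ lt_ik]]; first lia.
  by apply: cut_step; lia.
apply/negP; rewrite inE => vj_side.
have vk_side : connect (cut_edge G (v k.-1) (v k)) (v k.-1) (v k).
  apply: connect_trans vj_side (@connect_nat_down _ _ (fun i => v i) _ _ le_kj _).
  by move=> i /andP[le_ki lt_ij]; apply: cut_step; lia.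
by move: (side_notin treeG (v_edge_pred hk)); rewrite inE vk_side.
Qed.

Lemma fwd_mix k Dx Dy : 0 < k <= size s ->
  fwd (mix (side G (v k.-1) (v k)) Dy Dx) =1 splice (fwd Dx) (fwd Dy) k.
Proof.
move=> hk j; rewrite /splice /fwd /mix ffunE.
have [->|j_gt0] := posnP j; first by rewrite /= if_same.
have [lt_sj|le_js] := ltnP (size s) j; first by rewrite /= if_same.
by rewrite side_path //; case: ifP.
Qed.

(* Were the counts two apart, splicing the two orientations at a suitable
   edge of the path would write [x + y] as the sum of two other points of the
   polytope whose counts differ from both, so [conv [:: x; y]] is no face. *)
Lemma collider_count_adj (R : realType) x y :
  x \in CIM_points R G -> y \in CIM_points R G -> face_of (CIM_points R G) (conv [:: x; y]) ->
  collider_count x <= (collider_count y).+1.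
Proof.
move=> /CIM_pointsP[Dx [dagx skx ->]] /CIM_pointsP[Dy [dagy sky ->]] face.
pose N := (size s).+1.
have countE D : is_dag D -> has_skeleton D G -> collider_count (cim R D) = ndesc (fwd D) 0 N.
  by move=> dagD skD; rewrite collider_count_cim // ndesc_fwd.
rewrite !countE // leqNgt; apply/negP; rewrite -addn2 => lt_yx.
have fwdN D : fwd D N by rewrite /fwd ltn0Sn ltnSn.
have [k [/andP[k_gt0 lt_kN] eq_k desc_k]] :=
  @splice_lose_one_descent (fwd Dx) (fwd Dy) N erefl (etrans (fwdN Dx) (esym (fwdN Dy))) lt_yx.
have le_ks : k <= size s by rewrite -ltnS.
have hk : 0 < k <= size s by rewrite k_gt0 le_ks.
have eq_arc : darc Dx (v k.-1) (v k) = darc Dy (v k.-1) (v k).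
  by move: eq_k; rewrite /fwd k_gt0 ltnNge le_ks.
have agree := side_agree treeG (v_edge_pred hk) dagx skx dagy sky eq_arc.
have agree' : agree_across (side G (v k.-1) (v k)) Dy Dx.
  by move=> a b aL bL; have [-> ->] := agree a b aL bL.
have /andP[dag1 sk1] := mix_dag treeG dagx skx dagy sky agree.
have /andP[dag2 sk2] := mix_dag treeG dagy sky dagx skx agree'.
have sum_cim S :=
  cim_mix R S (dag_asym dagx) (dag_asym dagy) (dag_asym dag1) (dag_asym dag2).
have count1 : collider_count (cim R (mix (side G (v k.-1) (v k)) Dy Dx)) =
              (ndesc (fwd Dx) 0 N).-1.
  by rewrite countE // -desc_k; apply: eq_bigr => j _; rewrite !fwd_mix.
have := face_pair_sum face (conv_mem (cim_CIM_points R dag1 sk1))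
  (conv_mem (cim_CIM_points R dag2 sk2)) sum_cim (cim_is01 R _) (cim_is01 R _) (cim_is01 R _).
have a_gt0 : 0 < ndesc (fwd Dx) 0 N by apply: leq_trans lt_yx; rewrite addn2.
case=> /(congr1 (@collider_count R)); rewrite count1 countE // => e.
  by move: (ltn_predL (ndesc (fwd Dx) 0 N)); rewrite e ltnn a_gt0.
by move: lt_yx; rewrite -e addn2 prednK // ltnn.
Qed.

Lemma collider_count_walk (R : realType) q a : walk (CIM_points R G) a q ->
  collider_count a <= collider_count (last a q) + size q.
Proof.
elim: q a => [|b q IH] a /=; first by rewrite addn0.
case=> -[vert_a vert_b _ face] walk_q.
apply: leq_trans (collider_count_adj (vertex_mem vert_a) (vertex_mem vert_b) face) _.
by rewrite addnS ltnS IH.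
Qed.

Lemma collider_orient r j : 0 < j < size s ->
  collider (orient G r) j = (r (v j.-1) < r (v j)) && (r (v j.+1) < r (v j)).
Proof.
case: treeG => symG _ _ _ /andP[j_gt0 lt_js].
rewrite /collider !ffunE !inE v_edge_pred ?j_gt0 ?(ltnW lt_js) //.
by rewrite symG v_edge.
Qed.

Lemma index_v j : j <= size s -> index (v j) (x0 :: s) = j.
Proof. by move=> le_js; rewrite index_uniq. Qed.

Lemma colliders_alternating :
  \sum_(1 <= j < size s) collider (orient G (rank_key (fun i => odd (index i (x0 :: s))))) j
  = (size s)./2.
Proof.
rewrite -sum_odd; apply: eq_big_nat => j /andP[j_gt0 lt_js].
rewrite collider_orient ?j_gt0 // !rank_key_ltE !index_v; try lia.
all: by case: j j_gt0 {lt_js} => //= j _; case: (odd j).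
Qed.

Lemma colliders_monotone :
  \sum_(1 <= j < size s) collider (orient G (rank_key (fun i => index i (x0 :: s)))) j = 0.
Proof.
rewrite big_nat big1 // => j /andP[j_gt0 lt_js].
by rewrite collider_orient ?j_gt0 // [X in _ && X]rank_key_ltE !index_v ?andbF; lia.
Qed.

End LongPath.

Theorem mainTheorem4 (R : realType) (n : nat) (G : rel 'I_n) (p : nat) :
  is_tree G -> max_path_length G p ->
  diam_ge (CIM_points R G) p./2.
Proof.
move=> treeG [[x0 [s [/andP[pathG uniq_path] <-]]] _].
pose alt i := odd (index i (x0 :: s)); pose mon i := index i (x0 :: s).
have /andP[dag_alt sk_alt] := orient_dag treeG (rank_key_inj (h := alt)).
have /andP[dag_mon sk_mon] := orient_dag treeG (rank_key_inj (h := mon)).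
have vertex_cim D : is_dag D -> has_skeleton D G -> is_vertex (CIM_points R G) (cim R D).
  by move=> dagD skD; apply/is01_vertex/cim_CIM_points => //; apply: CIM_points_is01.
exists (cim R (orient G (rank_key alt))), (cim R (orient G (rank_key mon))).
split; try exact: vertex_cim.
move=> q walk_q last_q; have := collider_count_walk treeG pathG uniq_path walk_q.
rewrite last_q !(collider_count_cim treeG pathG uniq_path) //.
by rewrite colliders_alternating ?colliders_monotone.
Qed.
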